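(* Let $(A;A^+)$ be an $\mathbb{F}_1$-algebra pair. Every projective $\mathbb{B}[A;A^+]$-module is isomorphic to $\mathbb{B}(M,\le)$ for some partially ordered $A$-module $(M,\le)$.
   Context: $(A;A^+)$: $A$ a commutative monoid with zero (multiplicative), $A^+\subseteq A$ a sharp submonoid containing $0$. $A$-modules are pointed sets with $A$-action ($0$ acts to the base point, base point fixed). $\mathbb{B}[A;A^+]$ is the idempotent semiring of finitely generated $A^+$-submodules of $A$ with $\vee$ = union and $+$ = elementwise product. A partially ordered $A$-module is an $A$-module with a partial order such that $fv\le gv$ whenever $f\in A^+g$, and $v\le w\Rightarrow fv\le fw$ for $f\in A$. $\mathbb{B}(M,\le)$ is the set of $A^+$-submodules of $M$ that are lower sets and are the downward closure of a finitely generated $A^+$-submodule, a $\mathbb{B}[A;A^+]$-module under union and elementwise multiplication. A module is projective if every surjection onto it has a section. *)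

From Stdlib Require Import List.
Import ListNotations.
Set Implicit Arguments.

(* A : commutative monoid with (absorbing) zero, written multiplicatively;
   A^+ (f1plus) : a sharp submonoid containing 0 (its only unit is 1). *)
Record F1Pair := {
  f1A :> Type;
  f1mul : f1A -> f1A -> f1A;
  f1one : f1A;
  f1zero : f1A;
  f1mulA : forall x y z, f1mul x (f1mul y z) = f1mul (f1mul x y) z;
  f1mulC : forall x y, f1mul x y = f1mul y x;
  f1mul1 : forall x, f1mul f1one x = x;
  f1mul0 : forall x, f1mul f1zero x = f1zero;
  f1plus : f1A -> Prop;
  f1plus1 : f1plus f1one;
  f1plus0 : f1plus f1zero;
  f1plusM : forall x y, f1plus x -> f1plus y -> f1plus (f1mul x y);
  f1sharp : forall x y, f1plus x -> f1plus y -> f1mul x y = f1one -> x = f1one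
}.

Arguments f1mul {_} _ _.
Arguments f1plus {_} _.

Section BA.
Variable A : F1Pair.
Local Notation "x * y" := (f1mul x y).

Definition genA (gs : list A) : A -> Prop :=
  fun x => x = f1zero A \/ exists g h, In g gs /\ f1plus h /\ x = h * g.

Definition fgsubA (S : A -> Prop) : Prop :=
  exists gs : list A, forall x, S x <-> genA gs x.

Definition BA := { S : A -> Prop | fgsubA S }.

Lemma mul1r (x : A) : x * f1one A = x.
Proof. rewrite f1mulC; apply f1mul1. Qed.

Lemma mul0r (x : A) : x * f1zero A = f1zero A.
Proof. rewrite f1mulC; apply f1mul0. Qed.

Lemma mulACA (a b c d : A) : (a * b) * (c * d) = (a * c) * (b * d).
Proof.
  rewrite <- !f1mulA; f_equal. rewrite !f1mulA; f_equal; apply f1mulC.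
Qed.

Lemma genA0 gs : genA gs (f1zero A).
Proof. left; reflexivity. Qed.

Lemma fg_zero : fgsubA (fun x => x = f1zero A).
Proof.
  exists []; intro x; split; intro H.
  - left; exact H.
  - destruct H as [H|[g [h [Hin _]]]]; [exact H| destruct Hin].
Qed.
Definition BAzero : BA := exist _ _ fg_zero.

Lemma fg_one : fgsubA (f1plus).
Proof.
  exists [f1one A]; intro x; split; intro H.
  - right; exists (f1one A), x; split; [left; reflexivity|split; [exact H|]].
    symmetry; apply mul1r.
  - destruct H as [H|[g [h [Hin [Hh Hx]]]]].
    + subst; apply f1plus0.
    + destruct Hin as [Hg|[]]; subst; rewrite mul1r; exact Hh.
Qed.
Definition BAone : BA := exist _ _ fg_one.

Lemma fg_join (I J : BA) :
  fgsubA (fun x => proj1_sig I x \/ proj1_sig J x).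
Proof.
  destruct I as [S [gs1 H1]], J as [T [gs2 H2]]; simpl.
  exists (gs1 ++ gs2); intro x; rewrite H1, H2; unfold genA; split.
  - intros [[H|[g [h [Hg Hh]]]]|[H|[g [h [Hg Hh]]]]]; auto;
      right; exists g, h; rewrite in_app_iff; auto.
  - intros [H|[g [h [Hg Hh]]]]; auto.
    apply in_app_iff in Hg as [Hg|Hg]; [left|right]; right; exists g, h; auto.
Qed.
Definition BAjoin (I J : BA) : BA := exist _ _ (fg_join I J).

Lemma fg_prod (I J : BA) :
  fgsubA (fun x => exists a b, proj1_sig I a /\ proj1_sig J b /\ x = a * b).
Proof.
  destruct I as [S [gs1 H1]], J as [T [gs2 H2]]; simpl.
  exists (flat_map (fun g1 => map (fun g2 => g1 * g2) gs2) gs1).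
  intro x; split.
  - intros [a [b [Ha [Hb Hx]]]]; subst x.
    apply H1 in Ha; apply H2 in Hb.
    destruct Ha as [Ha|[g1 [h1 [Hg1 [Hh1 Ha]]]]].
    + subst; left; apply f1mul0.
    + destruct Hb as [Hb|[g2 [h2 [Hg2 [Hh2 Hb]]]]].
      * subst; left; apply mul0r.
      * subst; right; exists (g1 * g2), (h1 * h2); split; [|split].
        -- apply in_flat_map; exists g1; split; auto; apply in_map; auto.
        -- apply f1plusM; auto.
        -- apply mulACA.
  - intros [Hx|[g [h [Hg [Hh Hx]]]]].
    + exists (f1zero A), (f1zero A); split; [apply H1, genA0|split; [apply H2, genA0|]].
      rewrite f1mul0; exact Hx.
    + apply in_flat_map in Hg as [g1 [Hg1 Hg]]; apply in_map_iff in Hg as [g2 [Hg Hg2]].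
      exists (h * g1), (f1one A * g2); split; [|split].
      * apply H1; right; exists g1, h; auto.
      * apply H2; right; exists g2, (f1one A); split; [auto|split; [apply f1plus1|reflexivity]].
      * subst; rewrite mulACA, mul1r; reflexivity.
Qed.
Definition BAprod (I J : BA) : BA := exist _ _ (fg_prod I J).

End BA.

Record BMod (A : F1Pair) := {
  bm :> Type;
  bplus : bm -> bm -> bm;
  bzero : bm;
  bact : BA A -> bm -> bm;
  bplusA : forall x y z, bplus x (bplus y z) = bplus (bplus x y) z;
  bplusC : forall x y, bplus x y = bplus y x;
  bplus0 : forall x, bplus bzero x = x;
  bactDr : forall I x y, bact I (bplus x y) = bplus (bact I x) (bact I y);
  bactDl : forall I J x, bact (BAjoin I J) x = bplus (bact I x) (bact J x);
  bactM : forall I J x, bact (BAprod I J) x = bact I (bact J x);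
  bact1 : forall x, bact (BAone A) x = x;
  bact0l : forall x, bact (BAzero A) x = bzero;
  bact0r : forall I, bact I bzero = bzero
}.

Arguments bplus {_ _} _ _.
Arguments bact {_ _} _ _.

Definition isBHom {A : F1Pair} {N P : BMod A} (f : N -> P) : Prop :=
  (forall x y, f (bplus x y) = bplus (f x) (f y)) /\
  f (bzero N) = bzero P /\
  (forall I x, f (bact I x) = bact I (f x)).

Definition projectiveB (A : F1Pair) (P : BMod A) : Prop :=
  forall (N : BMod A) (p : N -> P), isBHom p -> (forall y, exists x, p x = y) ->
    exists s : P -> N, isBHom s /\ forall y, p (s y) = y.

Record AMod (A : F1Pair) := {
  am :> Type;
  ambase : am;
  amact : A -> am -> am;
  amact1 : forall v, amact (f1one A) v = v;
  amactM : forall f g v, amact (f1mul f g) v = amact f (amact g v);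
  amact0 : forall v, amact (f1zero A) v = ambase;
  amactb : forall f, amact f ambase = ambase
}.

Arguments amact {_ _} _ _.

Record POAMod (A : F1Pair) := {
  pom :> AMod A;
  ple : pom -> pom -> Prop;
  ple_refl : forall v, ple v v;
  ple_trans : forall u v w, ple u v -> ple v w -> ple u w;
  ple_antisym : forall v w, ple v w -> ple w v -> v = w;
  ple_scal : forall f g v, (exists h, f1plus h /\ f = f1mul h g) ->
               ple (amact f v) (amact g v);
  ple_mono : forall f v w, ple v w -> ple (amact f v) (amact f w)
}.

Arguments ple {_ _} _ _.

Section BM.
Variables (A : F1Pair) (M : POAMod A).

Definition genM (gs : list M) : M -> Prop :=
  fun u => u = ambase M \/
    exists g h, In g gs /\ f1plus h /\ u = amact h g.

Definition inBM (N : M -> Prop) : Prop :=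
  (N (ambase M) /\ forall f v, f1plus f -> N v -> N (amact f v)) /\
  (forall v w, ple v w -> N w -> N v) /\
  (exists gs : list M, forall v, N v <-> exists u, genM gs u /\ ple v u).

Definition BMset := { N : M -> Prop | inBM N }.

Definition BMjoin (N1 N2 : M -> Prop) : M -> Prop := fun v => N1 v \/ N2 v.
Definition BMzero : M -> Prop := fun v => ple v (ambase M).
Definition BMact (I : BA A) (N : M -> Prop) : M -> Prop :=
  fun v => exists f w, proj1_sig I f /\ N w /\ ple v (amact f w).

End BM.
Arguments BMjoin {_ _} _ _ _.
Arguments BMact {_ _} _ _ _.

Definition isoBM (A : F1Pair) (P : BMod A) (M : POAMod A) : Prop :=
  exists phi : P -> BMset M,
    (forall x y, phi x = phi y -> x = y) /\
    (forall N, exists x, phi x = N) /\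
    (forall x y v, proj1_sig (phi (bplus x y)) v <->
                   BMjoin (proj1_sig (phi x)) (proj1_sig (phi y)) v) /\
    (forall v, proj1_sig (phi (bzero P)) v <-> BMzero M v) /\
    (forall I x v, proj1_sig (phi (bact I x)) v <->
                   BMact I (proj1_sig (phi x)) v).

From Stdlib Require Import List FunctionalExtensionality PropExtensionality ProofIrrelevance IndefiniteDescription Classical.
Import ListNotations.
Set Implicit Arguments.
Unset Strict Implicit.
Set Maximal Implicit Insertion.

(** A B[A;A^+]-module P is a join-semilattice, ordered by x <= y iff x + y = y.  It is a
    quotient of the free module F on P, whose elements are finitely generated
    A^+-submodules of A x P, via (a, y) |-> <a> y; projectivity gives a section s.
    Call q a point if q = <a> y for some (a, y) in s(q).  For such a pair, <a> y <= z
    iff (a, y) lies in s(z), and since s preserves sums and the action, points are join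
    prime and q <= I x puts q below <f> w for some f in I and some point w <= x.  Taking
    a generator of s(x) that is maximal among the generators shows that every x is a
    finite sum of points.  So the points, with the induced order and the action
    f . q = <f> q, form a partially ordered A-module M, and x |-> {points below x} is an
    isomorphism P ~ B(M, <=). *)

Lemma proj1_sig_inj (U : Type) (Q : U -> Prop) (p q : {u | Q u}) :
  proj1_sig p = proj1_sig q -> p = q.
Proof. destruct p, q; apply subset_eq_compat. Qed.

Lemma sig_pred_ext (X : Type) (Q : (X -> Prop) -> Prop) (S T : {S : X -> Prop | Q S}) :
  (forall x, proj1_sig S x <-> proj1_sig T x) -> S = T.
Proof.
  intro H; apply proj1_sig_inj; extensionality x; apply propositional_extensionality, H.
Qed.

Lemma exists_maximal_above (U : Type) (R : U -> U -> Prop) :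
  (forall a, R a a) -> (forall a b c, R a b -> R b c -> R a c) ->
  forall (L : list U) a, exists b, (b = a \/ In b L) /\ R a b /\
    forall c, In c L -> R b c -> R c b.
Proof.
  intros Hrefl Htrans L; induction L as [|x L IH]; intro a.
  - exists a; simpl; intuition.
  - destruct (IH a) as [b [Hb [Hab Hmax]]].
    destruct (classic (R b x)) as [Hbx|Hbx].
    + destruct (IH x) as [b' [Hb' [Hxb' Hmax']]].
      exists b'; split; [right; destruct Hb' as [->|Hb']; simpl; auto|split; [eauto|]].
      intros c [<-|Hc]; auto.
    + exists b; split; [destruct Hb; simpl; auto|split; auto].
      intros c [<-|Hc] Hbc; [contradiction|auto].
Qed.

Lemma finite_choice (U V : Type) (R : U -> V -> Prop) (Q : V -> Prop) (L : list U) :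
  (forall a, In a L -> exists b, R a b /\ Q b) ->
  exists L', (forall a, In a L -> exists b, In b L' /\ R a b) /\ (forall b, In b L' -> Q b).
Proof.
  induction L as [|a L IH]; intro H.
  - exists []; simpl; tauto.
  - destruct (H a (or_introl eq_refl)) as [b [Hab Hb]].
    destruct IH as [L' [H1 H2]]; [intros; apply H; simpl; auto|].
    exists (b :: L'); split.
    + intros a' [<-|Ha']; [exists b; simpl; auto|].
      destruct (H1 a' Ha') as [b' [Hb' Hab']]; exists b'; simpl; auto.
    + intros b' [<-|Hb']; auto.
Qed.

Section Principal.
Variable A : F1Pair.
Local Notation "x * y" := (f1mul x y).

Definition princ (g : A) : BA A :=
  exist _ (genA A [g]) (ex_intro _ [g] (fun x => iff_refl _)).

Lemma princ_spec g x :
  proj1_sig (princ g) x <-> x = f1zero A \/ exists h, f1plus h /\ x = h * g.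
Proof.
  unfold princ, genA; simpl; split.
  - intros [H|[g' [h [[<-|[]] [Hh Hx]]]]]; eauto.
  - intros [H|[h [Hh Hx]]]; auto; right; exists g, h; auto.
Qed.

Lemma princ_self g : proj1_sig (princ g) g.
Proof.
  apply princ_spec; right; exists (f1one A); split; [apply f1plus1|symmetry; apply f1mul1].
Qed.

Lemma BA_has0 (I : BA A) : proj1_sig I (f1zero A).
Proof. destruct I as [I [gs H]]; apply H, genA0. Qed.

Lemma BA_closed (I : BA A) h f : f1plus h -> proj1_sig I f -> proj1_sig I (h * f).
Proof.
  destruct I as [I [gs H]]; simpl; intros Hh Hf; apply H; apply H in Hf.
  destruct Hf as [->|[g [h' [Hg [Hh' ->]]]]]; [left; apply mul0r|].
  right; exists g, (h * h'); rewrite f1mulA; auto using f1plusM.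
Qed.

Lemma princ_incl (I : BA A) f x : proj1_sig I f -> proj1_sig (princ f) x -> proj1_sig I x.
Proof.
  intros Hf Hx; apply princ_spec in Hx as [->|[h [Hh ->]]];
    [apply BA_has0|apply BA_closed; auto].
Qed.

Lemma princ_one : princ (f1one A) = BAone A.
Proof.
  apply sig_pred_ext; intro x; rewrite princ_spec; cbn [proj1_sig BAone BAzero BAprod]; split.
  - intros [->|[h [Hh ->]]]; [apply f1plus0|rewrite mul1r; auto].
  - intro H; right; exists x; rewrite mul1r; auto.
Qed.

Lemma princ_zero : princ (f1zero A) = BAzero A.
Proof.
  apply sig_pred_ext; intro x; rewrite princ_spec; cbn [proj1_sig BAone BAzero BAprod]; split; auto.
  intros [->|[h [Hh ->]]]; auto using mul0r.
Qed.

Lemma princ_mul f g : princ (f * g) = BAprod (princ f) (princ g).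
Proof.
  apply sig_pred_ext; intro x; rewrite princ_spec; cbn [proj1_sig BAone BAzero BAprod]; split.
  - intros [->|[h [Hh ->]]].
    + exists (f1zero A), (f1zero A); rewrite f1mul0; auto using BA_has0.
    + exists (h * f), g; split; [apply BA_closed; auto using princ_self|].
      split; [apply (princ_self g)|apply f1mulA].
  - intros [a [b [Ha [Hb ->]]]]; rewrite princ_spec in Ha, Hb.
    destruct Ha as [->|[h1 [Hh1 ->]]]; [left; apply f1mul0|].
    destruct Hb as [->|[h2 [Hh2 ->]]]; [left; apply mul0r|].
    right; exists (h1 * h2); split; [apply f1plusM; auto|apply mulACA].
Qed.

Lemma BAjoin_absorb (I J : BA A) :
  (forall x, proj1_sig J x -> proj1_sig I x) -> BAjoin I J = I.
Proof. intro H; apply sig_pred_ext; intro x; simpl; intuition. Qed.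

Definition bigjoin (l : list (BA A)) : BA A := fold_right (@BAjoin A) (BAzero A) l.

Lemma bigjoin_spec l x :
  proj1_sig (bigjoin l) x <-> x = f1zero A \/ exists J, In J l /\ proj1_sig J x.
Proof.
  induction l as [|J l IH]; simpl.
  - split; auto; intros [H|[J [[] _]]]; auto.
  - rewrite IH; split.
    + intros [H|[H|[J' [HJ H]]]]; eauto.
    + intros [H|[J' [[<-|HJ] H]]]; eauto.
Qed.

Lemma BA_bigjoin_princ (I : BA A) gs :
  (forall x, proj1_sig I x <-> genA A gs x) -> I = bigjoin (map princ gs).
Proof.
  intro HI; apply sig_pred_ext; intro x; rewrite HI, bigjoin_spec; unfold genA; split.
  - intros [H|[g [h [Hg [Hh ->]]]]]; auto.
    right; exists (princ g); split; [apply in_map; auto|apply princ_spec; eauto].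
  - intros [H|[J [HJ Hx]]]; auto.
    apply in_map_iff in HJ as [g [<- Hg]]; apply princ_spec in Hx as [H|[h [Hh ->]]]; auto.
    right; exists g, h; auto.
Qed.

End Principal.

Section Order.
Variables (A : F1Pair) (P : BMod A).

Definition ble (x y : P) : Prop := bplus x y = y.

Lemma bplus_idem (x : P) : bplus x x = x.
Proof.
  rewrite <- (bact1 P x) at 1 2; rewrite <- bactDl, BAjoin_absorb; auto using bact1.
Qed.

Lemma ble_refl x : ble x x.
Proof. apply bplus_idem. Qed.

Lemma ble_trans x y z : ble x y -> ble y z -> ble x z.
Proof. unfold ble; intros H1 H2; rewrite <- H2, bplusA, H1; reflexivity. Qed.

Lemma ble_antisym x y : ble x y -> ble y x -> x = y.
Proof. unfold ble; intros H1 H2; rewrite <- H1, <- H2 at 1; apply bplusC. Qed.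

Lemma bzero_ble x : ble (bzero P) x.
Proof. apply bplus0. Qed.

Lemma ble_plusl x y : ble x (bplus x y).
Proof. unfold ble; rewrite bplusA, bplus_idem; reflexivity. Qed.

Lemma ble_plusr x y : ble y (bplus x y).
Proof. rewrite bplusC; apply ble_plusl. Qed.

Lemma bplus_lub x y z : ble x z -> ble y z -> ble (bplus x y) z.
Proof. unfold ble; intros H1 H2; rewrite <- bplusA, H2, H1; reflexivity. Qed.

Lemma bact_monor I x y : ble x y -> ble (bact I x) (bact I y).
Proof. unfold ble; intro H; rewrite <- bactDr, H; reflexivity. Qed.

Lemma bact_monol (I J : BA A) x :
  (forall f, proj1_sig I f -> proj1_sig J f) -> ble (bact I x) (bact J x).
Proof.
  intro H; unfold ble; rewrite <- (BAjoin_absorb H) at 2; rewrite bactDl, bplusC; reflexivity.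
Qed.

Lemma bact_princ_ble h x : f1plus h -> ble (bact (princ h) x) x.
Proof.
  intro Hh; rewrite <- (bact1 P x) at 2; apply bact_monol; intro f; apply princ_incl, Hh.
Qed.

Definition bsum (l : list P) : P := fold_right bplus (bzero P) l.

Lemma bsum_ub l x : In x l -> ble x (bsum l).
Proof.
  induction l as [|y l IH]; simpl; [tauto|].
  intros [<-|H]; [apply ble_plusl|eapply ble_trans; [apply IH, H|apply ble_plusr]].
Qed.

Lemma bsum_lub l z : (forall x, In x l -> ble x z) -> ble (bsum l) z.
Proof.
  induction l as [|y l IH]; simpl; intro H; [apply bzero_ble|apply bplus_lub; auto].
Qed.

Lemma bsum_app l1 l2 : bsum (l1 ++ l2) = bplus (bsum l1) (bsum l2).
Proof.
  induction l1 as [|y l IH]; simpl; [symmetry; apply bplus0|rewrite IH, bplusA; reflexivity].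
Qed.

Lemma bsum_flat_map (U V : Type) (f : V -> P) (F : U -> list V) l :
  bsum (map f (flat_map F l)) = bsum (map (fun v => bsum (map f (F v))) l).
Proof.
  induction l as [|v l IH]; simpl; auto; rewrite map_app, bsum_app, IH; reflexivity.
Qed.

Lemma bact_bsum I l : bact I (bsum l) = bsum (map (bact I) l).
Proof.
  induction l as [|y l IH]; simpl; [apply bact0r|rewrite bactDr, IH; reflexivity].
Qed.

Lemma bact_bigjoin (l : list (BA A)) x :
  bact (bigjoin l) x = bsum (map (fun J => bact J x) l).
Proof.
  induction l as [|J l IH]; simpl; [apply bact0l|rewrite bactDl, IH; reflexivity].
Qed.

End Order.

Section Free.
Variables (A : F1Pair) (P : BMod A).
Local Notation "x * y" := (f1mul x y).

Definition genF (gs : list (A * P)) (v : A * P) : Prop :=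
  fst v = f1zero A \/ exists g h, In (g, snd v) gs /\ f1plus h /\ fst v = h * g.

Definition fgF (S : A * P -> Prop) : Prop := exists gs, forall v, S v <-> genF gs v.

Definition FSub := {S : A * P -> Prop | fgF S}.

Lemma genF_self gs v : In v gs -> genF gs v.
Proof.
  destruct v as [g y]; intro Hv; right; exists g, (f1one A); simpl.
  split; [auto|split; [apply f1plus1|symmetry; apply f1mul1]].
Qed.

Lemma genF_app gs1 gs2 v : genF (gs1 ++ gs2) v <-> genF gs1 v \/ genF gs2 v.
Proof.
  unfold genF; split.
  - intros [H|[g [h [Hg Hh]]]]; auto.
    apply in_app_iff in Hg as [Hg|Hg]; [left|right]; right; exists g, h; auto.
  - intros [[H|[g [h [Hg Hh]]]]|[H|[g [h [Hg Hh]]]]]; auto;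
      right; exists g, h; rewrite in_app_iff; auto.
Qed.

Lemma FSub_has0 (S : FSub) y : proj1_sig S (f1zero A, y).
Proof. destruct S as [S [gs H]]; apply H; left; reflexivity. Qed.

Lemma FSub_closed (S : FSub) h a y :
  f1plus h -> proj1_sig S (a, y) -> proj1_sig S (h * a, y).
Proof.
  destruct S as [S [gs H]]; simpl; intros Hh Ha; apply H; apply H in Ha.
  destruct Ha as [Ha|[g [h' [Hg [Hh' Ha]]]]]; simpl in *; subst.
  - left; apply mul0r.
  - right; exists g, (h * h'); rewrite f1mulA; auto using f1plusM.
Qed.

Lemma fgF_plus (S T : FSub) : fgF (fun v => proj1_sig S v \/ proj1_sig T v).
Proof.
  destruct S as [S [gs1 H1]], T as [T [gs2 H2]]; exists (gs1 ++ gs2); intro v.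
  rewrite genF_app, H1, H2; reflexivity.
Qed.

Definition Fplus (S T : FSub) : FSub := exist _ _ (fgF_plus S T).

Lemma fgF_zero : fgF (fun v => fst v = f1zero A).
Proof. exists []; intro v; unfold genF; split; auto; intros [H|[g [h [[] _]]]]; auto. Qed.

Definition Fzero : FSub := exist _ _ fgF_zero.

Definition Fact_pred (I : BA A) (S : A * P -> Prop) (v : A * P) : Prop :=
  exists f b, proj1_sig I f /\ S (b, snd v) /\ fst v = f * b.

Definition actlist (gsI : list A) (gs : list (A * P)) : list (A * P) :=
  flat_map (fun v => map (fun gi => (gi * fst v, snd v)) gsI) gs.

Lemma genF_actlist (I : BA A) (S : A * P -> Prop) gsI gs :
  (forall x, proj1_sig I x <-> genA A gsI x) -> (forall v, S v <-> genF gs v) ->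
  forall v, Fact_pred I S v <-> genF (actlist gsI gs) v.
Proof.
  intros HI HS [a y]; unfold Fact_pred, genF, actlist; simpl; split.
  - intros [f [b [Hf [Hb ->]]]]; apply HI in Hf; apply HS in Hb.
    destruct Hf as [->|[gi [h1 [Hgi [Hh1 ->]]]]]; [left; apply f1mul0|].
    destruct Hb as [Hb|[g [h2 [Hg [Hh2 Hb]]]]]; simpl in *; subst; [left; apply mul0r|].
    right; exists (gi * g), (h1 * h2); split; [|split; [apply f1plusM; auto|apply mulACA]].
    apply in_flat_map; exists (g, y); split; auto.
    apply in_map_iff; exists gi; auto.
  - intros [->|[g [h [Hg [Hh ->]]]]].
    + exists (f1zero A), (f1zero A); split; [apply HI, genA0|split; [apply HS; left; auto|]].
      rewrite f1mul0; reflexivity.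
    + apply in_flat_map in Hg as [[g0 y0] [Hg0 Hg]].
      apply in_map_iff in Hg as [gi [Hgi Hgi']]; injection Hgi as <- <-.
      exists (h * gi), g0; split; [apply HI; right; exists gi, h; auto|split].
      * apply HS, genF_self; auto.
      * apply f1mulA.
Qed.

Lemma fgF_act (I : BA A) (S : FSub) : fgF (Fact_pred I (proj1_sig S)).
Proof.
  destruct (proj2_sig I) as [gsI HI], (proj2_sig S) as [gs HS].
  exists (actlist gsI gs); apply genF_actlist; auto.
Qed.

Definition Fact (I : BA A) (S : FSub) : FSub := exist _ _ (fgF_act I S).

Definition FreeB : BMod A.
Proof.
  refine {| bm := FSub; bplus := Fplus; bzero := Fzero; bact := Fact |};
    intros; apply sig_pred_ext; intros [a0 y0]; simpl; unfold Fact_pred; simpl.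
  - tauto.
  - tauto.
  - split; [intros [->|H]; auto; apply FSub_has0|auto].
  - split; [intros [c [d [Hf [[Hb|Hb] Ha]]]]; [left|right]; eauto|].
    intros [[c [d [Hf [Hb Ha]]]]|[c [d [Hf [Hb Ha]]]]]; exists c, d; auto.
  - split; [intros [c [d [[Hf|Hf] [Hb Ha]]]]; [left|right]; eauto|].
    intros [[c [d [Hf [Hb Ha]]]]|[c [d [Hf [Hb Ha]]]]]; exists c, d; auto.
  - split.
    + intros [c [d [[c1 [c2 [Hf1 [Hf2 ->]]]] [Hb ->]]]].
      exists c1, (c2 * d); split; auto; split; [exists c2, d; auto|symmetry; apply f1mulA].
    + intros [c1 [b1 [Hf1 [[c2 [d [Hf2 [Hb ->]]]] ->]]]].
      exists (c1 * c2), d; split; [exists c1, c2; auto|split; auto]; apply f1mulA.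
  - split.
    + intros [c [d [Hf [Hb ->]]]]; apply FSub_closed; auto.
    + intro H; exists (f1one A), a0; split; [apply f1plus1|split; auto; symmetry; apply f1mul1].
  - split.
    + intros [c [d [-> [Hb ->]]]]; apply f1mul0.
    + intros ->; exists (f1zero A), (f1zero A); split; auto; split; [apply FSub_has0|symmetry; apply f1mul0].
  - split.
    + intros [c [d [Hf [-> ->]]]]; apply mul0r.
    + intros ->; exists (f1zero A), (f1zero A); split; [apply BA_has0|split; auto; symmetry; apply f1mul0].
Defined.

Definition scalv (v : A * P) : P := bact (princ (fst v)) (snd v).

Lemma scalv_zero v : fst v = f1zero A -> scalv v = bzero P.
Proof. unfold scalv; intros ->; rewrite princ_zero; apply bact0l. Qed.

Lemma scalv_one y : scalv (f1one A, y) = y.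
Proof. unfold scalv; simpl; rewrite princ_one; apply bact1. Qed.

Lemma scalv_mul f v : scalv (f * fst v, snd v) = bact (princ f) (scalv v).
Proof. unfold scalv; simpl; rewrite princ_mul, bactM; reflexivity. Qed.

Lemma scalv_mono h g y : f1plus h -> ble (scalv (h * g, y)) (scalv (g, y)).
Proof.
  intro Hh; apply bact_monol; intro f; apply princ_incl.
  simpl; apply princ_spec; right; eauto.
Qed.

Lemma scalv_ble_bsum v gs : genF gs v -> ble (scalv v) (bsum (map scalv gs)).
Proof.
  destruct v as [a y]; intros [Ha|[g [h [Hg [Hh Ha]]]]]; simpl in *; subst.
  - rewrite scalv_zero; auto using bzero_ble.
  - eapply ble_trans; [apply scalv_mono; auto|apply bsum_ub, in_map; auto].
Qed.

Lemma bsum_scalv_ble gs1 gs2 : (forall v, genF gs1 v -> genF gs2 v) ->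
  ble (bsum (map scalv gs1)) (bsum (map scalv gs2)).
Proof.
  intro H; apply bsum_lub; intros x Hx; apply in_map_iff in Hx as [v [<- Hv]].
  apply scalv_ble_bsum, H, genF_self, Hv.
Qed.

(* Evaluates some chosen list of generators; [projF_spec] shows the choice is irrelevant. *)
Definition projF (S : FSub) : P :=
  bsum (map scalv (proj1_sig (constructive_indefinite_description _ (proj2_sig S)))).

Lemma projF_spec (S : FSub) gs :
  (forall v, proj1_sig S v <-> genF gs v) -> projF S = bsum (map scalv gs).
Proof.
  intro H; unfold projF; destruct (constructive_indefinite_description _ _) as [gs0 H0]; simpl.
  apply ble_antisym; apply bsum_scalv_ble; intros v Hv; [apply H, H0|apply H0, H]; auto.
Qed.

Lemma projF_ub (S : FSub) v : proj1_sig S v -> ble (scalv v) (projF S).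
Proof.
  destruct (proj2_sig S) as [gs H]; rewrite (projF_spec H); intro Hv.
  apply scalv_ble_bsum, H, Hv.
Qed.

Lemma projF_plus S T : projF (Fplus S T) = bplus (projF S) (projF T).
Proof.
  destruct (proj2_sig S) as [gs1 H1], (proj2_sig T) as [gs2 H2].
  rewrite (projF_spec H1), (projF_spec H2), (projF_spec (S := Fplus S T) (gs := gs1 ++ gs2)).
  - rewrite map_app, bsum_app; reflexivity.
  - intro v; simpl; rewrite genF_app, H1, H2; reflexivity.
Qed.

Lemma projF_zero : projF Fzero = bzero P.
Proof.
  apply (projF_spec (S := Fzero) (gs := [])); intro v; simpl; unfold genF; split; auto.
  intros [H|[g [h [[] _]]]]; auto.
Qed.

Lemma projF_act I S : projF (Fact I S) = bact I (projF S).
Proof.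
  destruct (proj2_sig I) as [gsI HI], (proj2_sig S) as [gs HS].
  rewrite (projF_spec HS), (projF_spec (S := Fact I S) (gs := actlist gsI gs)).
  2: { apply genF_actlist; auto. }
  unfold actlist; rewrite bsum_flat_map, bact_bsum, map_map; f_equal.
  apply map_ext; intro v.
  rewrite (BA_bigjoin_princ HI), bact_bigjoin, !map_map; f_equal.
  apply map_ext; intro gi; apply scalv_mul.
Qed.

Lemma projF_hom : @isBHom A FreeB P projF.
Proof. split; [exact projF_plus|split; [exact projF_zero|exact projF_act]]. Qed.

Lemma projF_surj (y : P) : exists S : FreeB, projF S = y.
Proof.
  exists (exist _ (genF [(f1one A, y)]) (ex_intro _ [(f1one A, y)] (fun v => iff_refl _)) : FSub).
  rewrite (projF_spec (gs := [(f1one A, y)])); [|reflexivity].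
  simpl; rewrite bplusC, bplus0; apply scalv_one.
Qed.

End Free.

Section Projective.
Variables (A : F1Pair) (P : BMod A) (s : P -> FreeB P).
Hypothesis s_hom : isBHom s.
Hypothesis s_section : forall y, projF (s y) = y.
Local Notation "x * y" := (f1mul x y).

Definition sec_mem (v : A * P) (z : P) : Prop := proj1_sig (s z) v.

Lemma s_plus x y : s (bplus x y) = Fplus (s x) (s y).
Proof. apply s_hom. Qed.

Lemma s_zero : s (bzero P) = Fzero P.
Proof. apply s_hom. Qed.

Lemma s_act I x : s (bact I x) = Fact I (s x).
Proof. apply s_hom. Qed.

Lemma sec_mem_mono v a b : ble a b -> sec_mem v a -> sec_mem v b.
Proof. unfold ble, sec_mem; intros <- Hv; rewrite s_plus; simpl; auto. Qed.

Lemma sec_mem_zero v z : fst v = f1zero A -> sec_mem v z.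
Proof. destruct v as [a y]; simpl; intros ->; apply FSub_has0. Qed.

Lemma sec_mem_bsum v l :
  sec_mem v (bsum l) -> fst v = f1zero A \/ exists z, In z l /\ sec_mem v z.
Proof.
  induction l as [|z l IH]; simpl; unfold sec_mem.
  - rewrite s_zero; simpl; auto.
  - rewrite s_plus; simpl; intros [H|H]; [right; exists z; auto|].
    destruct (IH H) as [H'|[z' [Hz H']]]; auto; right; exists z'; auto.
Qed.

Lemma sec_mem_ble v z : sec_mem v z -> ble (scalv v) z.
Proof. intro H; rewrite <- (s_section z); apply projF_ub, H. Qed.

Definition sec_fixed (v : A * P) : Prop := sec_mem v (scalv v).

Definition is_point (q : P) : Prop := exists v, sec_fixed v /\ q = scalv v.

Lemma sec_fixed_ble_iff v z : sec_fixed v -> ble (scalv v) z <-> sec_mem v z.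
Proof. intro Hv; split; [intro H; exact (sec_mem_mono H Hv)|apply sec_mem_ble]. Qed.

Lemma point_ble_bsum q l :
  is_point q -> ble q (bsum l) -> ble q (bzero P) \/ exists z, In z l /\ ble q z.
Proof.
  intros [v [Hv ->]] H; apply (sec_fixed_ble_iff _ Hv), sec_mem_bsum in H as [H|[z [Hz H]]].
  - left; apply sec_fixed_ble_iff, sec_mem_zero; auto.
  - right; exists z; split; auto; apply sec_fixed_ble_iff; auto.
Qed.

Lemma point_ble_plus q x y : is_point q -> ble q (bplus x y) -> ble q x \/ ble q y.
Proof.
  intros [v [Hv ->]] H; apply (sec_fixed_ble_iff _ Hv) in H.
  unfold sec_mem in H; rewrite s_plus in H; simpl in H.
  destruct H as [H|H]; [left|right]; apply sec_fixed_ble_iff; auto.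
Qed.

Lemma point_zero : is_point (bzero P).
Proof.
  exists (f1zero A, bzero P); split; [apply sec_mem_zero; auto|].
  symmetry; apply scalv_zero; reflexivity.
Qed.

Lemma point_act f q : is_point q -> is_point (bact (princ f) q).
Proof.
  intros [v [Hv ->]]; exists (f * fst v, snd v); split; [|symmetry; apply scalv_mul].
  unfold sec_fixed, sec_mem; rewrite scalv_mul, s_act.
  exists f, (fst v); split; [apply princ_self|split; [destruct v; exact Hv|reflexivity]].
Qed.

Definition Mpt := {q : P | is_point q}.

Definition Mzero : Mpt := exist _ _ point_zero.

Definition Mact (f : A) (q : Mpt) : Mpt := exist _ _ (point_act f (proj2_sig q)).

Lemma generator_sec_fixed x gs b :
  (forall v, sec_mem v x <-> genF gs v) -> In b gs ->
  (forall c, In c gs -> ble (scalv b) (scalv c) -> ble (scalv c) (scalv b)) ->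
  sec_fixed b.
Proof.
  intros Hgs Hb Hmax.
  assert (Hx : x = bsum (map scalv gs)) by (rewrite <- (s_section x); apply projF_spec, Hgs).
  assert (Hbx : sec_mem b x) by (apply Hgs, genF_self, Hb).
  rewrite Hx in Hbx; apply sec_mem_bsum in Hbx as [H|[z [Hz H]]]; [apply sec_mem_zero, H|].
  apply in_map_iff in Hz as [c [<- Hc]].
  apply (sec_mem_mono (Hmax c Hc (sec_mem_ble H)) H).
Qed.

Lemma point_above v x :
  sec_mem v x -> exists q : Mpt, ble (scalv v) (proj1_sig q) /\ ble (proj1_sig q) x.
Proof.
  destruct (proj2_sig (s x)) as [gs Hgs]; fold (sec_mem v x); intro Hv.
  apply Hgs in Hv as [Hv|[g [h [Hg [Hh Hv]]]]].
  - exists Mzero; rewrite scalv_zero; auto using bzero_ble.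
  - destruct (exists_maximal_above (R := fun a b => ble (scalv a) (scalv b))
      (fun a => ble_refl (scalv a)) (fun a b c => @ble_trans A P _ _ _) gs (g, snd v))
      as [b [Hb [Hgb Hmax]]].
    assert (Hbgs : In b gs) by (destruct Hb as [->|Hb]; auto).
    exists (exist _ _ (ex_intro _ b (conj (generator_sec_fixed Hgs Hbgs Hmax) eq_refl)) : Mpt).
    simpl; split.
    + destruct v as [a y]; simpl in *; subst a.
      eapply ble_trans; [apply scalv_mono, Hh|exact Hgb].
    + apply sec_mem_ble, Hgs, genF_self, Hbgs.
Qed.

Lemma sum_of_points x : exists ms : list Mpt, x = bsum (map (@proj1_sig _ _) ms).
Proof.
  destruct (proj2_sig (s x)) as [gs Hgs].
  assert (Hx : x = bsum (map scalv gs)) by (rewrite <- (s_section x); apply projF_spec, Hgs).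
  destruct (@finite_choice _ _ (fun v (q : Mpt) => ble (scalv v) (proj1_sig q))
    (fun q => ble (proj1_sig q) x) gs) as [ms [Hcover Hbelow]].
  { intros v Hv; apply point_above, Hgs, genF_self, Hv. }
  exists ms; apply ble_antisym.
  - rewrite Hx at 1; apply bsum_lub; intros z Hz; apply in_map_iff in Hz as [v [<- Hv]].
    destruct (Hcover v Hv) as [q [Hq Hvq]].
    eapply ble_trans; [exact Hvq|apply bsum_ub, in_map, Hq].
  - apply bsum_lub; intros z Hz; apply in_map_iff in Hz as [q [<- Hq]]; auto.
Qed.

Definition MA : AMod A.
Proof.
  refine {| am := Mpt; ambase := Mzero; amact := Mact |}; intros; apply proj1_sig_inj; simpl.
  - rewrite princ_one; apply bact1.
  - rewrite princ_mul; apply bactM.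
  - rewrite princ_zero; apply bact0l.
  - apply bact0r.
Defined.

Definition MP : POAMod A.
Proof.
  refine {| pom := MA; ple := fun q r : Mpt => ble (proj1_sig q) (proj1_sig r) |}.
  - intros; apply ble_refl.
  - intros u v w; apply ble_trans.
  - intros v w H1 H2; apply proj1_sig_inj, ble_antisym; auto.
  - intros f g v [h [Hh ->]]; simpl; rewrite princ_mul, bactM; apply bact_princ_ble, Hh.
  - intros f v w H; apply bact_monor, H.
Defined.

Lemma genM_ble_iff (ms : list MP) (q : MP) :
  (exists u, genM MP ms u /\ ple q u) <->
  ble (proj1_sig q) (bsum (map (@proj1_sig _ _) ms)).
Proof.
  split.
  - intros [u [[->|[g [h [Hg [Hh ->]]]]] Hq]]; eapply ble_trans; try exact Hq.
    + apply bzero_ble.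
    + eapply ble_trans; [apply bact_princ_ble, Hh|apply bsum_ub, in_map, Hg].
  - intro H; destruct (point_ble_bsum (proj2_sig q) H) as [H'|[z [Hz H']]].
    + exists Mzero; split; [left|]; auto.
    + apply in_map_iff in Hz as [g [<- Hg]].
      exists g; split; [|exact H'].
      right; exists g, (f1one A); split; [exact Hg|split; [apply f1plus1|symmetry; apply (amact1 MA)]].
Qed.

Lemma phi_inBM x : inBM MP (fun q : MP => ble (proj1_sig q) x).
Proof.
  split; [split|split].
  - apply bzero_ble.
  - intros f q Hf Hq; eapply ble_trans; [apply bact_princ_ble, Hf|exact Hq].
  - intros q r Hqr Hr; eapply ble_trans; [exact Hqr|exact Hr].
  - destruct (sum_of_points x) as [ms Hx].
    exists ms; intro q; rewrite genM_ble_iff, <- Hx; reflexivity.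
Qed.

Definition phi (x : P) : BMset MP := exist _ _ (phi_inBM x).

Lemma ble_of_points x y :
  (forall q : Mpt, ble (proj1_sig q) x -> ble (proj1_sig q) y) -> ble x y.
Proof.
  intro H; destruct (sum_of_points x) as [ms Hx]; rewrite Hx at 1.
  apply bsum_lub; intros z Hz; apply in_map_iff in Hz as [q [<- Hq]].
  apply H; rewrite Hx; apply bsum_ub, in_map, Hq.
Qed.

Lemma point_ble_act I x (q : Mpt) :
  ble (proj1_sig q) (bact I x) -> exists f (w : Mpt),
    proj1_sig I f /\ ble (proj1_sig w) x /\ ble (proj1_sig q) (bact (princ f) (proj1_sig w)).
Proof.
  destruct q as [q [[a y] [Hv ->]]]; simpl; intro H.
  apply (sec_fixed_ble_iff _ Hv) in H; unfold sec_mem in H; rewrite s_act in H.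
  destruct H as [f [b [Hf [Hb Ha]]]]; simpl in Ha, Hb; subst a.
  destruct (point_above (v := (b, y)) Hb) as [w [Hbw Hwx]].
  exists f, w; split; [exact Hf|split; [exact Hwx|]].
  change (ble (scalv (f * fst (b, y), snd (b, y))) (bact (princ f) (proj1_sig w))).
  rewrite scalv_mul; apply bact_monor, Hbw.
Qed.

Lemma phi_iso : isoBM P MP.
Proof.
  exists phi; split; [|split; [|split; [|split]]].
  - intros x y H; apply ble_antisym; apply ble_of_points; intros q Hq.
    + change (proj1_sig (phi y) q); rewrite <- H; exact Hq.
    + change (proj1_sig (phi x) q); rewrite H; exact Hq.
  - intro N; destruct (proj2_sig N) as [_ [_ [ms Hms]]].
    exists (bsum (map (@proj1_sig _ _) ms)).
    apply sig_pred_ext; intro q; simpl; rewrite Hms, genM_ble_iff; reflexivity.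
  - intros x y q; unfold BMjoin; simpl; split; [apply point_ble_plus, proj2_sig|].
    intros [H|H]; eapply ble_trans; eauto using ble_plusl, ble_plusr.
  - reflexivity.
  - intros I x q; unfold BMact; simpl; split; [apply point_ble_act|].
    intros [f [w [Hf [Hw Hq]]]]; eapply ble_trans; [exact Hq|].
    eapply ble_trans; [apply (bact_monol (J := I)); intro g; apply princ_incl, Hf|apply bact_monor, Hw].
Qed.

End Projective.

Theorem mainTheorem15 (A : F1Pair) (P : BMod A) :
  projectiveB P -> exists M : POAMod A, isoBM P M.
Proof.
  intro Hproj.
  destruct (Hproj (FreeB P) projF (projF_hom P) (@projF_surj A P)) as [s [s_hom s_section]].
  exists (MP s_hom); exact (phi_iso s_hom s_section).
Qed.
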